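(* Let $r\ge3$, $n=2^r$, $m=2^{r-2}$ and $N=m$, so that $\Psi_n(x)=V_m(x)$. Let $p(x),q(x)\in\mathbb Z[x]$ have degree at most $m-1$, written $p=\sum_{i<m}a_iV_i$, $q=\sum_{i<m}b_iV_i$, and let $\overline r(x)=\sum_{i<m}c_iV_i(x)$ be the residue of $p(x)q(x)$ modulo $\Psi_n(x)$. Then $$\mathbf c=\frac4N\,\mathsf{IDCT}\big(\mathsf{DCT}(\mathbf a)\odot\mathsf{DCT}(\mathbf b)\big),$$ where $\mathbf a,\mathbf b,\mathbf c$ are the coefficient vectors and $\odot$ is the componentwise product.
   Context: $V_0(x)=1$, $V_i(x)=2T_i(x/2)$ for $i\ge1$ ($T_i$ the Chebyshev polynomial of the first kind). $\Psi_n$ is the minimal polynomial of $2\cos(2\pi/n)$. For $\mathbf a\in\mathbb R^N$: $\mathsf{DCT}(\mathbf a)_j=\frac{a_0}{2}+\sum_{i=1}^{N-1}a_i\cos\!\left(\frac{2\pi(2j+1)i}{4N}\right)$ and $\mathsf{IDCT}(\mathbf a)_j=\sum_{i=0}^{N-1}a_i\cos\!\left(\frac{2\pi(2i+1)j}{4N}\right)$, $0\le j\le N-1$. *)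

From HB Require Import structures.
From mathcomp Require Import all_boot all_order all_algebra.
From mathcomp Require Import reals trigo.
Set Implicit Arguments. Unset Strict Implicit. Unset Printing Implicit Defensive.
Import Order.TTheory GRing.Theory Num.Theory.
Local Open Scope ring_scope.

Fixpoint chebT (R : nzRingType) (i : nat) : {poly R} :=
  match i with
  | 0 => 1
  | 1 => 'X
  | (j.+1 as k).+1 => 2%:R *: 'X * chebT R k - chebT R j
  end.

Definition V (i : nat) : {poly rat} :=
  if i == 0%N then 1 else 2%:P * (chebT rat i \Po ((1/2 : rat) *: 'X)).

Definition Vsum (m : nat) (a : nat -> rat) : {poly rat} :=
  \sum_(i < m) a i *: V i.

Definition is_minpoly (R : realType) (P : {poly rat}) (alpha : R) : Prop :=
  [/\ P \is monic, root (map_poly (fun x : rat => ratr x : R) P) alpha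
    & forall Q : {poly rat}, Q != 0 ->
        root (map_poly (fun x : rat => ratr x : R) Q) alpha -> (size P <= size Q)%N].

Definition DCT (R : realType) (N : nat) (a : nat -> R) (j : nat) : R :=
  a 0%N / 2 + \sum_(1 <= i < N)
     a i * cos (2 * pi * ((2 * j + 1) * i)%:R / (4 * N)%:R).

Definition IDCT (R : realType) (N : nat) (a : nat -> R) (j : nat) : R :=
  \sum_(0 <= i < N) a i * cos (2 * pi * ((2 * i + 1) * j)%:R / (4 * N)%:R).

(* Over Z, V_N is obtained by iterating x |-> x^2 - 2 from
   X^2 - 2, so it is monic, reduces to a power of X mod 2 and has constant
   term +-2: it is Eisenstein at 2, hence irreducible over Q. Its roots are the
   Chebyshev nodes 2 cos((2j+1) pi / (2N)), among them 2 cos(2 pi / 2^r), so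
   Psi = V_N. At the nodes V_i takes the value 2 cos(i theta_j), so evaluating
   p q = (p q div V_N) V_N + (p q mod V_N) there turns reduction modulo V_N
   into the pointwise product of the DCTs, and the discrete orthogonality of
   the cosines inverts the DCT. *)

From HB Require Import structures.
From mathcomp Require Import all_boot all_order all_algebra.
From mathcomp Require Import reals trigo.
From mathcomp Require Import ring lra zify.
From mathcomp Require Rstruct.
Set Implicit Arguments. Unset Strict Implicit. Unset Printing Implicit Defensive.
Import Order.TTheory GRing.Theory Num.Theory.
Local Open Scope ring_scope.


Local Notation pZtoQ := (map_poly (intr : int -> rat)).

(* The integer polynomial V_{2^(j+1)}, from V_{2i} = V_i^2 - 2. *)
Fixpoint V2expZ (j : nat) : {poly int} :=
  if j is j'.+1 then V2expZ j' ^+ 2 - 2%:P else 'X^2 - 2%:P.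

Lemma V2expZ_monic_size j :
  V2expZ j \is monic /\ size (V2expZ j) = (2 ^ j.+1).+1.
Proof.
elim: j => [|j [monj szj]] /=; first by rewrite monicXnsubC ?size_XnsubC.
have szj2 : size (V2expZ j ^+ 2) = (2 ^ j.+2).+1.
  have mon2 : V2expZ j ^+ 2 \is monic by exact: monic_exp.
  rewrite -[LHS]prednK ?size_poly_gt0 ?monic_neq0 //.
  by rewrite size_exp szj /= [in RHS]expnSr.
have lt2 : (size (- (2%:P : {poly int})) < size (V2expZ j ^+ 2))%N.
  by rewrite szj2 size_polyN size_polyC ltnS; case: (_ != 0); rewrite ?expn_gt0.
by rewrite monicE lead_coefDl // -monicE monic_exp // size_addl.
Qed.

Lemma V2expZ_coef0 j : (V2expZ j)`_0 = if j is 0 then -2 else 2.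
Proof.
elim: j => [|j IHj] /=; first by rewrite coefB coefXn coefC.
by rewrite coefB coefC -!horner_coef0 hornerE !horner_coef0 IHj; case: j {IHj}.
Qed.

Lemma V2expZ_mod2 j : map_poly (intr : int -> 'F_2) (V2expZ j) = 'X^(2 ^ j.+1).
Proof.
have two0 : (2%:~R : 'F_2) = 0 by exact: (pchar_Fp_0 (isT : prime 2)).
elim: j => [|j IHj] /=.
  by rewrite rmorphB /= map_polyXn map_polyC /= two0 subr0.
by rewrite rmorphB rmorphXn /= IHj map_polyC /= two0 subr0 -exprM -expnSr.
Qed.

Lemma dvdz_coef_Fp (p : nat) (q : {poly int}) i : prime p ->
  (p %| q`_i)%Z = ((map_poly (intr : int -> 'F_p) q)`_i == 0).
Proof. by move=> p_pr; rewrite coef_map_id0 // (dvdz_pcharf (pchar_Fp p_pr)). Qed.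

Lemma irreducible_V2expZ j : irreducible_poly (V2expZ j).
Proof.
have [monj szj] := V2expZ_monic_size j.
apply: (@eisenstein_crit 2) => //.
- by rewrite szj eqSS expn_eq0.
- by rewrite (monicP monj).
- by rewrite V2expZ_coef0; case: j {monj szj}.
- move=> i; rewrite szj /= dvdz_coef_Fp // V2expZ_mod2 coefXn => lti.
  by rewrite (ltn_eqF lti).
Qed.

Lemma map_chebT (R S : nzRingType) (f : {rmorphism R -> S}) i :
  map_poly f (chebT R i) = chebT S i.
Proof.
suff [] : map_poly f (chebT R i) = chebT S i /\
          map_poly f (chebT R i.+1) = chebT S i.+1 by [].
elim: i => [|i [IHi IHi1]]; first by rewrite /= rmorph1 map_polyX.
by split=> //=; rewrite rmorphB rmorphM /= map_polyZ map_polyX rmorph_nat IHi IHi1.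
Qed.

Section ChebyshevCos.
Variable R : realType.

Lemma chebT_cos i (t : R) : (chebT R i).[cos t] = cos (i%:R * t).
Proof.
suff [] : (chebT R i).[cos t] = cos (i%:R * t) /\
          (chebT R i.+1).[cos t] = cos (i.+1%:R * t) by [].
elim: i => [|i [IHi IHi1]]; first by rewrite /= hornerC hornerX mul0r cos0 mul1r.
split=> //=; rewrite hornerD hornerN hornerM hornerZ hornerX IHi IHi1.
have -> : i.+2%:R * t = i.+1%:R * t + t by rewrite -addn1 natrD; ring.
have -> : i%:R * t = i.+1%:R * t - t by rewrite -[i.+1]addn1 natrD; ring.
by rewrite (cosB (i.+1%:R * t) t) cosD; ring.
Qed.

Definition horner_ratr (p : {poly rat}) (x : R) : R := (map_poly ratr p).[x].

Lemma horner_ratr_V i t :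
  horner_ratr (V i) (2 * cos t) = if i == 0%N then 1 else 2 * cos (i%:R * t).
Proof.
rewrite /horner_ratr /V; case: eqP => _; first by rewrite rmorph1 hornerC.
rewrite rmorphM /= map_polyC map_comp_poly map_chebT map_polyZ map_polyX /=.
rewrite hornerM hornerC horner_comp hornerZ hornerX !rmorph_nat.
by rewrite (_ : 1 / 2 * (2 * cos t) = cos t) ?chebT_cos //; field.
Qed.

Lemma poly_cos_eq0 (d : {poly R}) : (forall t, d.[2 * cos t] = 0) -> d = 0.
Proof.
move=> d_cos; apply/eqP/negPn/negP => d_neq0.
pose n := size d; have n_gt0 : (0 < n)%N by rewrite size_poly_gt0.
have nR : (0 : R) < n%:R by rewrite ltr0n.
pose xs := [seq (i%:R / n%:R : R) | i <- iota 0 n].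
have xs_roots : all (root d) xs.
  apply/allP => x /mapP [i]; rewrite mem_iota add0n => /andP [_ lt_in] ->.
  have x_range : i%:R / n%:R / 2 \in `[-1, 1 : R].
    have ge0 : 0 <= i%:R / n%:R :> R by rewrite divr_ge0 ?ler0n ?ltW.
    have le1 : i%:R / n%:R <= 1 :> R by rewrite ler_pdivrMr // mul1r ler_nat ltnW.
    by rewrite in_itv /=; apply/andP; split; lra.
  have -> : i%:R / n%:R = 2 * cos (acos (i%:R / n%:R / 2)) :> R.
    by rewrite (acosK x_range); lra.
  by rewrite /root d_cos.
have xs_uniq : uniq xs.
  rewrite map_inj_uniq ?iota_uniq // => i j /(congr1 ( *%R^~ n%:R)).
  by rewrite !divfK ?lt0r_neq0 // => /eqP; rewrite eqr_nat => /eqP.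
by have := max_poly_roots d_neq0 xs_roots xs_uniq; rewrite size_map size_iota ltnn.
Qed.

Lemma eq_poly_cos (p q : {poly rat}) :
  (forall t : R, horner_ratr p (2 * cos t) = horner_ratr q (2 * cos t)) -> p = q.
Proof.
move=> pq; apply: (map_poly_inj (ratr : {rmorphism rat -> R})); apply/eqP.
rewrite -subr_eq0; apply/eqP/poly_cos_eq0 => t.
by rewrite hornerD hornerN [_.[_]](pq t) subrr.
Qed.

End ChebyshevCos.

(* Identities between rational polynomials are checked by evaluation in the
   real numbers of the standard library. *)
Section RationalIdentities.
Import Rstruct.

Lemma V1 : V 1 = 'X.
Proof.
apply: (@eq_poly_cos Rdefinitions.R) => t.
by rewrite horner_ratr_V mul1r /horner_ratr map_polyX hornerX.
Qed.

Lemma V_double i : (0 < i)%N -> V (2 * i) = V i ^+ 2 - 2%:P.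
Proof.
move=> i_gt0; apply: (@eq_poly_cos Rdefinitions.R) => t.
rewrite horner_ratr_V muln_eq0 (gtn_eqF i_gt0) /horner_ratr.
rewrite rmorphB rmorphXn /= map_polyC /= hornerD hornerN horner_exp hornerC.
rewrite -/(horner_ratr _ _) horner_ratr_V (gtn_eqF i_gt0).
have -> : (2 * i)%:R * t = (i%:R * t) *+ 2 by rewrite natrM -mulrA mulr_natl.
by rewrite ratr_nat cos_mulr2n; ring.
Qed.

Lemma V2expZ_V j : pZtoQ (V2expZ j) = V (2 ^ j.+1).
Proof.
elim: j => [|j IHj] /=.
  by rewrite (@V_double 1%N isT) V1 rmorphB /= map_polyXn map_polyC /=.
by rewrite expnS V_double ?expn_gt0 // -IHj rmorphB rmorphXn /= map_polyC.
Qed.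

End RationalIdentities.

Lemma V2exp_monic j : V (2 ^ j.+1) \is monic.
Proof. by rewrite -(V2expZ_V j) monic_map //; case: (V2expZ_monic_size j). Qed.

Lemma V2exp_irreducible j : irreducible_poly (V (2 ^ j.+1)).
Proof. by rewrite -(V2expZ_V j); apply/irreducible_rat_int/irreducible_V2expZ. Qed.

Lemma minpoly_eq_irreducible (R : realType) (P Q : {poly rat}) (alpha : R) :
  is_minpoly P alpha -> Q \is monic -> irreducible_poly Q ->
  root (map_poly ratr Q) alpha -> P = Q.
Proof.
case=> monP rootP minP monQ [_ irrQ] rootQ.
have P_neq0 := monic_neq0 monP.
have dvdPQ : P %| Q.
  apply/modp_eq0P/eqP/negPn/negP => /minP min_mod.
  suff /min_mod : root (map_poly ratr (Q %% P)) alpha.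
    by rewrite leqNgt ltn_modp P_neq0.
  move: rootQ; rewrite {1}(divp_eq Q P) rmorphD rmorphM /= /root hornerD hornerM.
  by rewrite (eqP rootP) mulr0 add0r.
have szP : size P != 1%N.
  apply: contraTneq rootP => /eqP /size_poly1P [c c_neq0 ->].
  by rewrite map_polyC rootC fmorph_eq0.
by apply/eqP; rewrite -eqp_monic // irrQ.
Qed.

Section ChebyshevNodes.
Variable R : realType.

Definition cheb_angle (N j : nat) : R := (2 * j + 1)%:R * pi / (2 * N)%:R.

Lemma DCT_angleE (N i j : nat) :
  2 * pi * ((2 * j + 1) * i)%:R / (4 * N)%:R = i%:R * cheb_angle N j.
Proof.
rewrite /cheb_angle; have [->|N_gt0] := posnP N; first by rewrite !muln0 invr0 !mulr0.
have N_neq0 : (N%:R : R) != 0 by rewrite pnatr_eq0 -lt0n.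
by rewrite !natrM; field.
Qed.

Lemma sin_natr_pi (s : nat) : sin (s%:R * pi) = 0 :> R.
Proof. by rewrite mulr_natl -[_ *+ s]add0r (alternatingn (@sinDpi R)) sin0 mulr0. Qed.

Lemma cos_N_cheb_angle (N j : nat) : (0 < N)%N -> cos (N%:R * cheb_angle N j) = 0.
Proof.
move=> N_gt0; have -> : N%:R * cheb_angle N j = pi / 2 + pi *+ j.
  rewrite /cheb_angle -mulr_natr !natrM natrD; field.
  by rewrite pnatr_eq0 -lt0n.
by rewrite (alternatingn (@cosDpi R)) cos_pihalf mulr0.
Qed.

Lemma sum_cos_cheb_angle (N s : nat) : (s < 2 * N)%N ->
  \sum_(j < N) cos (s%:R * cheb_angle N j) = if s == 0%N then N%:R else 0.
Proof.
move=> lt_s2N; case: eqP => [->|/eqP s_neq0].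
  by under eq_bigr do rewrite mul0r cos0; rewrite sumr_const card_ord.
pose x : R := s%:R * pi / (2 * N)%:R.
have N2_gt0 : (0 < 2 * N)%N by lia.
have sin_x_gt0 : 0 < sin x.
  apply: sin_gt0_pi; rewrite divr_gt0 ?mulr_gt0 ?pi_gt0 ?ltr0n ?N2_gt0 ?lt0n //=.
  by rewrite ltr_pdivrMr ?ltr0n // [X in _ < X]mulrC ltr_pM2r ?pi_gt0 ?ltr_nat.
have telescope j : cos (s%:R * cheb_angle N j) * (sin x *+ 2) =
    sin ((2 * j.+1)%:R * x) - sin ((2 * j)%:R * x).
  have -> : s%:R * cheb_angle N j = (2 * j + 1)%:R * x by rewrite /x /cheb_angle; ring.
  have -> : (2 * j.+1)%:R * x = (2 * j + 1)%:R * x + x.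
    by rewrite -[j.+1]addn1 !(natrD, natrM); ring.
  have -> : (2 * j)%:R * x = (2 * j + 1)%:R * x - x.
    by rewrite !(natrD, natrM); ring.
  by rewrite sinD sinB; ring.
have : (\sum_(j < N) cos (s%:R * cheb_angle N j)) * (sin x *+ 2) = 0.
  rewrite mulr_suml; under eq_bigr do rewrite telescope.
  rewrite -(big_mkord xpredT (fun j => sin ((2 * j.+1)%:R * x) - sin ((2 * j)%:R * x))).
  rewrite (telescope_sumr (fun j => sin ((2 * j)%:R * x))) // muln0 mul0r sin0.
  have -> : (2 * N)%:R * x = s%:R * pi by rewrite /x mulrC divfK ?pnatr_eq0 -?lt0n.
  by rewrite sin_natr_pi subrr.
by move/eqP; rewrite mulf_eq0 mulrn_eq0 (gt_eqF sin_x_gt0) !orbF => /eqP.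
Qed.

Lemma sum_cos_mul_cheb_angle (N i k : nat) : (i < N)%N -> (k < N)%N ->
  \sum_(j < N) cos (i%:R * cheb_angle N j) * cos (k%:R * cheb_angle N j) =
  if i == k then (if i == 0%N then N%:R else N%:R / 2) else 0.
Proof.
wlog le_ki : i k / (k <= i)%N => [wlog_ki lt_iN lt_kN|lt_iN lt_kN].
  have [/wlog_ki -> //|/ltnW/wlog_ki] := leqP k i.
  under eq_bigr do rewrite mulrC.
  by move=> -> //; rewrite eq_sym; case: eqP => // ->.
have cos_mul j : cos (i%:R * cheb_angle N j) * cos (k%:R * cheb_angle N j) =
    (cos ((i + k)%:R * cheb_angle N j) + cos ((i - k)%:R * cheb_angle N j)) / 2.
  by rewrite natrD natrB // mulrBl (cosB (i%:R * _)) [(_ + k%:R) * _]mulrDl cosD; field.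
under eq_bigr do rewrite cos_mul.
rewrite -mulr_suml big_split /= !sum_cos_cheb_angle; try lia.
have [<-|ne_ik] := eqVneq i k; last first.
  have -> : (i + k == 0)%N = false by lia.
  have -> : (i - k == 0)%N = false by lia.
  by rewrite addr0 mul0r.
by rewrite addnn subnn double_eq0; case: eqP => _; field.
Qed.

Lemma DCTE (N : nat) (u : nat -> R) (j : nat) : (0 < N)%N ->
  DCT N u j =
  \sum_(i < N) (if i == 0%N :> nat then 2^-1 else 1) * u i * cos (i%:R * cheb_angle N j).
Proof.
case: N => // N _; rewrite /DCT big_ord_recl /= mul0r cos0 mulr1 big_add1 /= big_mkord.
by congr (_ + _); [rewrite mulrC | apply: eq_bigr => i _; rewrite mul1r DCT_angleE].
Qed.

Lemma IDCTE (N : nat) (v : nat -> R) (k : nat) :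
  IDCT N v k = \sum_(j < N) v j * cos (k%:R * cheb_angle N j).
Proof. by rewrite /IDCT big_mkord; apply: eq_bigr => j _; rewrite DCT_angleE. Qed.

Lemma IDCT_DCT (N : nat) (u : nat -> R) (k : nat) : (k < N)%N ->
  IDCT N (DCT N u) k = N%:R / 2 * u k.
Proof.
move=> lt_kN; have N_gt0 : (0 < N)%N by lia.
rewrite IDCTE; under eq_bigr do rewrite DCTE // mulr_suml.
rewrite exchange_big /=.
under eq_bigr => i _ do
  (under eq_bigr do rewrite -(mulrA (_ * _));
   rewrite -mulr_sumr sum_cos_mul_cheb_angle //).
rewrite (bigD1 (Ordinal lt_kN)) //= eqxx big1 ?addr0; last first.
  move=> i ne_ik; rewrite [X in _ * X]ifF ?mulr0 //.
  by apply: contraNF ne_ik => /eqP eq_ik; apply/eqP/val_inj.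
by case: eqP => _ /=; field.
Qed.

Lemma horner_ratr_Vsum (N : nat) (u : nat -> rat) (j : nat) : (0 < N)%N ->
  horner_ratr (Vsum N u) (2 * cos (cheb_angle N j)) =
  2 * DCT N (fun i => ratr (u i)) j.
Proof.
move=> N_gt0; rewrite DCTE // /horner_ratr /Vsum rmorph_sum horner_sum mulr_sumr.
apply: eq_bigr => i _; rewrite /= map_polyZ hornerZ -/(horner_ratr _ _) horner_ratr_V.
by case: eqP => [->|_]; rewrite ?mul0r ?cos0 /=; field.
Qed.

Lemma horner_ratr_V_node (N j : nat) : (0 < N)%N ->
  horner_ratr (V N) (2 * cos (cheb_angle N j)) = 0.
Proof. by move=> N_gt0; rewrite horner_ratr_V gtn_eqF // cos_N_cheb_angle ?mulr0. Qed.

Lemma DCT_Vsum_mulmod (N : nat) (u v w : nat -> rat) (j : nat) : (0 < N)%N ->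
  (Vsum N u * Vsum N v) %% V N = Vsum N w ->
  DCT N (fun i => ratr (u i) : R) j * DCT N (fun i => ratr (v i) : R) j =
  DCT N (fun i => ratr (w i) : R) j / 2.
Proof.
move=> N_gt0 mod_uv; pose x := 2 * cos (cheb_angle N j).
have := congr1 (fun p => horner_ratr p x) (divp_eq (Vsum N u * Vsum N v) (V N)).
rewrite mod_uv /horner_ratr !rmorphD !rmorphM /= !hornerD !hornerM -!/(horner_ratr _ x).
rewrite !horner_ratr_Vsum // horner_ratr_V_node // mulr0 add0r => eq_node.
have two_neq0 : (2 : R) != 0 by rewrite pnatr_eq0.
apply: (mulIf two_neq0); rewrite divfK //.
by apply: (mulfI two_neq0); rewrite -eq_node; ring.
Qed.

End ChebyshevNodes.

Lemma minpoly_cos_2pi_pow2 (R : realType) (r : nat) (Psi : {poly rat}) : (3 <= r)%N ->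
  is_minpoly Psi (2 * cos (2 * pi / (2 ^ r)%:R) : R) -> Psi = V (2 ^ (r - 2)).
Proof.
move=> r_ge3; have [k ->] : exists k, r = k.+3 by exists (r - 3)%N; lia.
rewrite subSS subSS subn0 => minPsi.
apply: (minpoly_eq_irreducible minPsi (V2exp_monic k) (V2exp_irreducible k)).
have -> : 2 * pi / (2 ^ k.+3)%:R = cheb_angle R (2 ^ k.+1) 0.
  have pow_neq0 : (2 ^ k)%:R != 0 :> R by rewrite pnatr_eq0 expn_eq0.
  by rewrite /cheb_angle !expnS !natrM; field.
by apply/eqP; apply: horner_ratr_V_node; rewrite expn_gt0.
Qed.

Theorem mainTheorem8 (R : realType) (r : nat) (hr : (3 <= r)%N)
  (Psi : {poly rat})
  (hPsi : is_minpoly Psi (2 * cos (2 * pi / (2 ^ r)%:R) : R))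
  (a b : nat -> int) (c : nat -> rat)
  (hc : (Vsum (2 ^ (r - 2)) (fun i => (a i)%:~R)
         * Vsum (2 ^ (r - 2)) (fun i => (b i)%:~R)) %% Psi
        = Vsum (2 ^ (r - 2)) c) :
  forall k : nat, (k < 2 ^ (r - 2))%N ->
    (ratr (c k) : R) =
      4 / (2 ^ (r - 2))%:R *
      IDCT (2 ^ (r - 2))
        (fun j => DCT (2 ^ (r - 2)) (fun i => (a i)%:~R : R) j
                  * DCT (2 ^ (r - 2)) (fun i => (b i)%:~R : R) j) k.
Proof.
move=> k; rewrite (minpoly_cos_2pi_pow2 hr hPsi) in hc.
set N := (2 ^ (r - 2))%N in hc *; move=> lt_kN.
have N_gt0 : (0 < N)%N by rewrite expn_gt0.
have ratr_intE (z : nat -> int) : (fun i => ratr (z i)%:~R : R) = (fun i => (z i)%:~R).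
  by apply: boolp.funext => i; rewrite ratr_int.
have DCT_prod j := DCT_Vsum_mulmod R j N_gt0 hc; rewrite !ratr_intE in DCT_prod.
have -> : IDCT N (fun j => DCT N (fun i => (a i)%:~R : R) j
                           * DCT N (fun i => (b i)%:~R : R) j) k =
          IDCT N (DCT N (fun i => ratr (c i) : R)) k / 2.
  by rewrite /IDCT mulr_suml; apply: eq_bigr => j _; rewrite DCT_prod mulrAC.
have N_neq0 : N%:R != 0 :> R by rewrite pnatr_eq0 -lt0n.
by rewrite IDCT_DCT //; field.
Qed.
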